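(* Let $p_0,p_1,p_2$ be positive integers with $\gcd(p_0,p_1,p_2)=1$, and put $n=p_0+p_1+p_2$. Let $E=(\mathbb{Z}/n\mathbb{Z})\times\{0,1,2\}$ and define permutations $\sigma_0,\sigma_1$ of $E$ by $$\sigma_0(m,0)=(m,1),\quad \sigma_0(m,1)=(m,2),\quad \sigma_0(m,2)=(m,0),$$ $$\sigma_1(m,0)=(m-p_1,2),\quad \sigma_1(m,1)=(m-p_2,0),\quad \sigma_1(m,2)=(m-p_0,1),$$ with arithmetic in the first coordinate modulo $n$. Let $\alpha=\gcd(n,\,p_0p_1-p_2^2)$. Then the subgroup $\langle\sigma_0\sigma_1,\sigma_1\sigma_0\rangle$ of the symmetric group on $E$ has order $n^2/\alpha$.
   Context: These $\sigma_0,\sigma_1$ are the monodromy permutations of the dessin drawn on the rational billiards surface of the triangle with angles $(p_0\pi/n,p_1\pi/n,p_2\pi/n)$, acting on its $3n$ edges labeled $(m,i)$. Products are composition of functions: $(\sigma_0\sigma_1)(e)=\sigma_0(\sigma_1(e))$. *)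

From mathcomp Require Import all_boot all_order all_algebra all_fingroup.
Set Implicit Arguments. Unset Strict Implicit. Unset Printing Implicit Defensive.
Import GRing.Theory.
Local Open Scope ring_scope.

(* Edges (m,i) of E = Z/nZ x {0,1,2}; 'Z_n is Z/nZ for n >= 2 (here n >= 3). *)
Definition edge (n : nat) := ('Z_n * 'I_3)%type.

Definition i0 : 'I_3 := @Ordinal 3 0 isT.
Definition i1 : 'I_3 := @Ordinal 3 1 isT.
Definition i2 : 'I_3 := @Ordinal 3 2 isT.

Definition sig0_fun (n : nat) (x : edge n) : edge n :=
  let: (m, i) := x in
  match val i with 0%N => (m, i1) | 1%N => (m, i2) | _ => (m, i0) end.
Definition sig0_inv (n : nat) (x : edge n) : edge n :=
  let: (m, i) := x in
  match val i with 0%N => (m, i2) | 1%N => (m, i0) | _ => (m, i1) end.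

Definition sig1_fun (n p0 p1 p2 : nat) (x : edge n) : edge n :=
  let: (m, i) := x in
  match val i with
  | 0%N => (m - p1%:R, i2) | 1%N => (m - p2%:R, i0) | _ => (m - p0%:R, i1) end.
Definition sig1_inv (n p0 p1 p2 : nat) (x : edge n) : edge n :=
  let: (m, i) := x in
  match val i with
  | 0%N => (m + p2%:R, i1) | 1%N => (m + p0%:R, i2) | _ => (m + p1%:R, i0) end.

Lemma sig0_can n : cancel (@sig0_fun n) (@sig0_inv n).
Proof. by case=> m [[|[|[|i]]] Hi] //=; congr pair; apply: val_inj. Qed.

Lemma sig1_can n p0 p1 p2 : cancel (sig1_fun p0 p1 p2) (@sig1_inv n p0 p1 p2).
Proof.
by case=> m [[|[|[|i]]] Hi] //=; rewrite subrK; congr pair; apply: val_inj.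
Qed.

Definition sig0 (n : nat) : {perm edge n} := perm (can_inj (@sig0_can n)).
Definition sig1 (n p0 p1 p2 : nat) : {perm edge n} :=
  perm (can_inj (@sig1_can n p0 p1 p2)).

(* Composition of functions: (s0 s1)(e) = s0 (s1 e).  In mathcomp,
   (s * t) x = t (s x), so the paper's s0 s1 is (s1 * s0)%g. *)
Definition comp_perm (T : finType) (s t : {perm T}) : {perm T} := (t * s)%g.

From mathcomp Require Import all_boot all_order all_algebra all_fingroup.
From mathcomp Require Import ring.
Import GRing.Theory.

(* Both s0 s1 and s1 s0 preserve each sheet {(m, i) | m} and translate it,
   by -(p1, p2, p0) and by -(p2, p0, p1) respectively.  These vectors have
   coordinate sum -n = 0 in Z/n, so the generated group is isomorphic to the
   image of (k, l) |-> (k p1 + l p2, k p2 + l p0) in (Z/n)^2.  As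
   gcd(p1, p2, n) = 1, the first coordinate of this image is onto; by the
   adjugate identities p1 Y = l D + p2 z and p2 Y = p0 z - k D (z, Y the two
   coordinates, D = p0 p1 - p2^2), the fibre over 0 consists of the multiples
   of alpha = gcd(n, D).  Hence the image has n * (n / alpha) elements. *)

Local Open Scope ring_scope.

Definition sym_det (a b c : nat) : int := (a * c)%N%:Z - (b ^ 2)%N%:Z.

Lemma dvdz_gcd_sym_det {n a b : nat} (c : nat) (k l : int) :
  coprime (gcdn a b) n -> (n %| k * a + l * b)%Z ->
  (gcdn n `|sym_det a b c| %| k * b + l * c)%Z.
Proof.
move=> ab_n_coprime n_dvd.
set g := gcdn n _; set Y := k * b + l * c.
have g_n : (g%:Z %| n%:Z)%Z by rewrite dvdzE dvdn_gcdl.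
have g_det : (g%:Z %| sym_det a b c)%Z by rewrite dvdzE dvdn_gcdr.
have g_first := dvdz_trans g_n n_dvd.
have g_aY : (g%:Z %| a%:Z * Y)%Z.
  have -> : a%:Z * Y = l * sym_det a b c + b%:Z * (k * a + l * b).
    by rewrite /Y /sym_det !PoszM; ring.
  by rewrite rpredD ?dvdz_mull.
have g_bY : (g%:Z %| b%:Z * Y)%Z.
  have -> : b%:Z * Y = c%:Z * (k * a + l * b) - k * sym_det a b c.
    by rewrite /Y /sym_det !PoszM; ring.
  by rewrite rpredB ?dvdz_mull.
have g_nY : (g%:Z %| n%:Z * Y)%Z by rewrite dvdz_mulr.
have natE (m : nat) : (g%:Z %| m%:Z * Y)%Z = (g %| m * `|Y|)%N by rewrite dvdzE abszM.
rewrite dvdzE /=.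
have : (g %| gcdn (gcdn (a * `|Y|) (b * `|Y|)) (n * `|Y|))%N.
  by rewrite !dvdn_gcd -!natE g_aY g_bY g_nY.
by rewrite -!muln_gcdl (eqP ab_n_coprime) mul1n.
Qed.

Lemma coprime_gcdn_sum (p0 p1 p2 : nat) :
  gcdn (gcdn p0 p1) p2 = 1%N -> coprime (gcdn p1 p2) (p0 + p1 + p2).
Proof.
move=> p_coprime; rewrite /coprime -dvdn1 -p_coprime.
set d := gcdn (gcdn p1 p2) _.
have d_p1 : (d %| p1)%N := dvdn_trans (dvdn_gcdl _ _) (dvdn_gcdl _ _).
have d_p2 : (d %| p2)%N := dvdn_trans (dvdn_gcdl _ _) (dvdn_gcdr _ _).
have d_p0 : (d %| p0)%N.
  by have := dvdn_gcdr (gcdn p1 p2) (p0 + p1 + p2); rewrite -/d -addnA dvdn_addl ?dvdn_add.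
by rewrite !dvdn_gcd d_p0 d_p1 d_p2.
Qed.

Definition span2 n (u v : 'Z_n * 'Z_n) : {set 'Z_n * 'Z_n} :=
  [set (k * u.1 + l * v.1, k * u.2 + l * v.2) | k : 'Z_n, l : 'Z_n].

Section CardGraph.
Variables (n d : nat).
Hypotheses (n_gt1 : (1 < n)%N) (d_dvd_n : (d %| n)%N).

Definition mod_graph (e : 'Z_n) : {set 'Z_n * 'Z_n} :=
  [set (xj.1, xj.1 * e + (d * xj.2)%:R) | xj : 'Z_n * 'I_(n %/ d)].

Lemma card_mod_graph e : #|mod_graph e| = (n * (n %/ d))%N.
Proof.
have d_gt0 : (0 < d)%N by apply: dvdn_gt0 d_dvd_n; apply: ltnW.
rewrite card_imset ?card_prod ?card_ord ?Zp_cast // => -[x j] [x' j'] eq_xj.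
have /= ex := congr1 fst eq_xj; move: (congr1 snd eq_xj); rewrite /= -ex.
move/addrI/(congr1 (@nat_of_ord _)); rewrite !val_Zp_nat //.
have mul_lt (i : 'I_(n %/ d)) : (d * i < n)%N by rewrite mulnC -ltn_divRL.
by rewrite !modn_small ?mul_lt // => /eqP; rewrite eqn_pmul2l // => /eqP /val_inj ->.
Qed.

End CardGraph.

Section SymmetricImage.
Variables (n a b c : nat).
Hypotheses (n_gt1 : (1 < n)%N) (ab_n_coprime : coprime (gcdn a b) n).

Local Notation g := (gcdn n `|sym_det a b c|).

Lemma exists_comb_eq1 : exists k l : 'Z_n, k * a%:R + l * b%:R = 1.
Proof.
have [u [v uv]] := Bezoutz a b.
have uvZ : u%:~R * a%:R + v%:~R * b%:R = (gcdn a b)%:R :> 'Z_n.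
  have := congr1 (intmul (1 : 'Z_n)) uv; rewrite intrD !intrM => ->.
  by rewrite /gcdz !absz_nat.
have h_unit : ((gcdn a b)%:R : 'Z_n) \is a GRing.unit.
  by rewrite unitZpE // coprime_sym.
exists (u%:~R / (gcdn a b)%:R), (v%:~R / (gcdn a b)%:R).
by rewrite mulrAC [v%:~R / _ * _]mulrAC -mulrDl uvZ divrr.
Qed.

Lemma exists_gcd_det_mul :
  exists d : 'Z_n, g%:R = d * (a%:R * c%:R - b%:R ^+ 2).
Proof.
have [u [v uv]] := Bezoutz n (sym_det a b c).
have uvZ : u%:~R * n%:R + v%:~R * (sym_det a b c)%:~R = g%:R :> 'Z_n.
  by have := congr1 (intmul (1 : 'Z_n)) uv; rewrite intrD !intrM => ->.
exists v%:~R; rewrite -uvZ pchar_Zp // mulr0 add0r /sym_det intrB.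
by rewrite -natrM -natrX.
Qed.

Lemma gcd_det_dvd_snd {k l : 'Z_n} :
  k * a%:R + l * b%:R = 0 -> (g %| nat_of_ord (k * b%:R + l * c%:R)%R)%N.
Proof.
have natE (p q : nat) : k * p%:R + l * q%:R = (k * p + l * q)%N%:R :> 'Z_n.
  by rewrite natrD !natrM !natr_Zp.
rewrite !natE => /(congr1 (@nat_of_ord _)); rewrite !val_Zp_nat // => /eqP first_dvd.
have := dvdz_gcd_sym_det c k l ab_n_coprime.
rewrite !dvdzE -!PoszM -!PoszD /= => /(_ first_dvd) g_dvd.
by rewrite /dvdn modn_dvdm ?dvdn_gcdl.
Qed.

Lemma span2_sym_mod_graph :
  exists e, span2 n (a%:R, b%:R) (b%:R, c%:R) = mod_graph n g e.
Proof.
have [k1 [l1 kl1]] := exists_comb_eq1.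
have [d gd] := exists_gcd_det_mul.
have g_gt0 : (0 < g)%N by rewrite gcdn_gt0 (ltnW n_gt1).
exists (k1 * b%:R + l1 * c%:R); apply/setP => -[x y].
apply/imset2P/imsetP => /=.
- case=> k l _ _ [-> ->].
  set k' := k - (k * a%:R + l * b%:R) * k1.
  set l' := l - (k * a%:R + l * b%:R) * l1.
  have first0 : k' * a%:R + l' * b%:R = 0.
    transitivity ((k * a%:R + l * b%:R) * (1 - (k1 * a%:R + l1 * b%:R))).
      by rewrite /k' /l'; ring.
    by rewrite kl1 subrr mulr0.
  have g_dvd := gcd_det_dvd_snd first0.
  set r := k' * b%:R + l' * c%:R in g_dvd.
  have r_lt : (r %/ g < n %/ g)%N.
    by rewrite ltn_divRL ?dvdn_gcdl // divnK // -[n in (_ < n)%N](Zp_cast n_gt1) ltn_ord.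
  exists (k * a%:R + l * b%:R, Ordinal r_lt) => //; congr pair.
  by rewrite mulnC divnK // natr_Zp /r /k' /l' /=; ring.
- case=> -[x' j] _ [-> ->].
  exists (x' * k1 - j%:R * d * b%:R) (x' * l1 + j%:R * d * a%:R) => //.
  congr pair; last by rewrite natrM gd; ring.
  by rewrite -[LHS]mulr1 -[in LHS]kl1; ring.
Qed.

Lemma card_sym_span2 :
  #|span2 n (a%:R, b%:R) (b%:R, c%:R)| = (n * (n %/ g))%N.
Proof.
have [e ->] := span2_sym_mod_graph.
exact/card_mod_graph/dvdn_gcdl.
Qed.

End SymmetricImage.

Section SheetShifts.
Variable n : nat.

Definition sheet_shift_fun (t : {ffun 'I_3 -> 'Z_n}) (x : edge n) : edge n :=
  (x.1 - t x.2, x.2).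

Lemma sheet_shift_funK t : cancel (sheet_shift_fun t) (sheet_shift_fun (- t)).
Proof. by case=> m i; rewrite /sheet_shift_fun /= ffunE opprK subrK. Qed.

Definition sheet_shift t : {perm edge n} := perm (can_inj (sheet_shift_funK t)).

Lemma sheet_shiftE t m i : sheet_shift t (m, i) = (m - t i, i).
Proof. by rewrite permE. Qed.

Lemma sheet_shiftD t t' : sheet_shift (t + t') = (sheet_shift t * sheet_shift t')%g.
Proof.
by apply/permP => -[m i]; rewrite permM !sheet_shiftE ffunE opprD addrA.
Qed.

Lemma sheet_shift_inj : injective sheet_shift.
Proof.
move=> t t' /permP eq_tt'; apply/ffunP => i.
have := congr1 fst (eq_tt' (0, i)).
by rewrite !sheet_shiftE /= !sub0r => /eqP; rewrite eqr_opp => /eqP.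
Qed.

Definition plane_vec (u : 'Z_n * 'Z_n) : {ffun 'I_3 -> 'Z_n} :=
  [ffun i => match val i with 0 => u.1 | 1 => u.2 | _ => - (u.1 + u.2) end].

Lemma plane_vecD x y x' y' :
  plane_vec (x + x', y + y') = plane_vec (x, y) + plane_vec (x', y').
Proof. by apply/ffunP => -[[|[|i]] ?]; rewrite !ffunE //=; ring. Qed.

Lemma plane_vec_inj : injective plane_vec.
Proof.
move=> [x y] [x' y'] /ffunP eq_uv.
by have := eq_uv i0; have := eq_uv i1; rewrite !ffunE /= => -> ->.
Qed.

Definition plane_shift u := sheet_shift (plane_vec u).

Lemma plane_shiftD x y x' y' :
  plane_shift (x + x', y + y') = (plane_shift (x, y) * plane_shift (x', y'))%g.
Proof. by rewrite /plane_shift plane_vecD sheet_shiftD. Qed.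

Lemma plane_shift0 : plane_shift (0, 0) = 1%g.
Proof.
by apply: (mulIg (plane_shift (0, 0))); rewrite mul1g -plane_shiftD addr0.
Qed.

Lemma plane_shiftMn x y j :
  (plane_shift (x, y) ^+ j)%g = plane_shift (x *+ j, y *+ j).
Proof.
elim: j => [|j IHj]; first by rewrite expg0 !mulr0n plane_shift0.
by rewrite expgSr IHj -plane_shiftD !mulrSr.
Qed.

Lemma plane_shift_inj : injective plane_shift.
Proof. by move=> u v /sheet_shift_inj /plane_vec_inj. Qed.

Lemma gen_plane_shift u v :
  <<[set plane_shift u; plane_shift v]>>%g = plane_shift @: span2 n u v.
Proof.
set S := plane_shift @: _.
have span_shift k l : plane_shift (k * u.1 + l * v.1, k * u.2 + l * v.2) \in S.
  by rewrite imset_f //; apply/imset2P; exists k l.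
have S_group : group_set S.
  apply/group_setP; split.
    by have := span_shift 0 0; rewrite !mul0r addr0 plane_shift0.
  move=> _ _ /imsetP[_ /imset2P[k l _ _ ->] ->] /imsetP[_ /imset2P[k' l' _ _ ->] ->].
  rewrite -plane_shiftD (_ : (_, _) = ((k + k') * u.1 + (l + l') * v.1,
                                       (k + k') * u.2 + (l + l') * v.2)) //.
  by congr pair; ring.
apply/eqP; rewrite eqEsubset; apply/andP; split.
  rewrite (gen_subG _ (Group S_group)) subUset !sub1set; apply/andP; split.
    by have := span_shift 1 0; rewrite !mul1r !mul0r !addr0 -surjective_pairing.
  by have := span_shift 0 1; rewrite !mul1r !mul0r !add0r -surjective_pairing.
apply/subsetP => _ /imsetP[_ /imset2P[k l _ _ ->] ->].
rewrite (_ : (_, _) = (u.1 *+ k + v.1 *+ l, u.2 *+ k + v.2 *+ l)); last first.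
  by congr pair; rewrite -[k in LHS]natr_Zp -[l in LHS]natr_Zp !mulr_natl.
rewrite plane_shiftD -!plane_shiftMn -!surjective_pairing.
by rewrite groupM ?groupX ?mem_gen // !inE eqxx ?orbT.
Qed.

End SheetShifts.

Section DessinMonodromy.
Variables (n p0 p1 p2 : nat).
Hypothesis sum_eq0 : (p0 + p1 + p2)%:R = 0 :> 'Z_n.

Lemma sig0_sig1E :
  comp_perm (sig0 n) (sig1 n p0 p1 p2) = plane_shift n (p1%:R, p2%:R).
Proof.
have p0E : - (p1%:R + p2%:R) = p0%:R :> 'Z_n.
  by rewrite -[LHS]add0r -sum_eq0 !natrD; ring.
apply/permP => -[m [[|[|[|i]]] lt_i3]] //;
  rewrite /comp_perm permM /plane_shift sheet_shiftE ffunE !permE /= ?p0E;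
  by congr pair; apply: val_inj.
Qed.

Lemma sig1_sig0E :
  comp_perm (sig1 n p0 p1 p2) (sig0 n) = plane_shift n (p2%:R, p0%:R).
Proof.
have p1E : - (p2%:R + p0%:R) = p1%:R :> 'Z_n.
  by rewrite -[LHS]add0r -sum_eq0 !natrD; ring.
apply/permP => -[m [[|[|[|i]]] lt_i3]] //;
  rewrite /comp_perm permM /plane_shift sheet_shiftE ffunE !permE /= ?p1E;
  by congr pair; apply: val_inj.
Qed.

End DessinMonodromy.

Theorem lemma3 (p0 p1 p2 : nat) :
  (0 < p0)%N -> (0 < p1)%N -> (0 < p2)%N -> gcdn (gcdn p0 p1) p2 = 1%N ->
  let n := (p0 + p1 + p2)%N in
  let s0 := sig0 n in
  let s1 := sig1 n p0 p1 p2 in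
  let alpha := gcdn n `|(p0 * p1)%N - (p2 ^ 2)%N|%N in
  #|<<[set comp_perm s0 s1; comp_perm s1 s0]>>%g| = (n ^ 2 %/ alpha)%N.
Proof.
move=> p0_gt0 p1_gt0 p2_gt0 p_coprime n s0 s1 alpha.
have n_gt1 : (1 < n)%N by rewrite /n -addnA -[2%N]/(1 + 1)%N leq_add ?addn_gt0 ?p1_gt0.
have sum_eq0 : (n%:R : 'Z_n) = 0 := pchar_Zp n_gt1.
rewrite /s0 /s1 sig0_sig1E // sig1_sig0E // gen_plane_shift.
rewrite card_imset; last exact: plane_shift_inj.
rewrite card_sym_span2 ?coprime_gcdn_sum // /alpha [(p0 * p1)%N]mulnC.
by rewrite -mulnn muln_divA ?dvdn_gcdl.
Qed.
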